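(* Let $\nu\in(0,1)$ and $t>0$. For integers $m\ge0$ put $g_m(t):=t^{(1-2^{-m})\nu}f_\nu\big(t^{2^{-m}}\big)$ (so $g_0(t)=f_\nu(t)$). Then for every $m\in\mathbb{N}$, $$t^\nu\le g_m(t)\le g_{m-1}(t),$$ i.e. $$t^\nu\le\cdots\le t^{(1-\frac{1}{2^m})\nu}f_\nu\big(t^{\frac1{2^m}}\big)\le t^{(1-\frac{1}{2^{m-1}})\nu}f_\nu\big(t^{\frac1{2^{m-1}}}\big)\le\cdots\le t^{\frac{3\nu}{4}}f_\nu\big(t^{\frac14}\big)\le t^{\frac{\nu}{2}}f_\nu\big(t^{\frac12}\big)\le f_\nu(t),$$ and moreover $g_m(t)\to t^\nu$ as $m\to\infty$.
   Context: For $\nu\in(0,1)$, $f_\nu(t):=\dfrac{1}{\log t}\left\{\dfrac{1-\nu}{\nu}(t^\nu-1)+\dfrac{\nu}{1-\nu}(t-t^\nu)\right\}$ for $t>0$, $t\ne1$, and $f_\nu(1):=1$ (this is the weighted logarithmic mean $L_\nu(1,t)$). *)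

From Stdlib Require Import Reals.
Open Scope R_scope.

(* Weighted logarithmic mean f_nu(t) = L_nu(1,t), for t > 0 (f_nu(1) = 1). *)
Definition f_nu (nu t : R) : R :=
  if Req_EM_T t 1 then 1
  else / ln t * ((1 - nu) / nu * (Rpower t nu - 1)
                 + nu / (1 - nu) * (t - Rpower t nu)).

Definition g_m (nu : R) (m : nat) (t : R) : R :=
  Rpower t ((1 - / 2 ^ m) * nu) * f_nu nu (Rpower t (/ 2 ^ m)).

(* Substituting t = exp x, g_m(t) = exp(nu (ln t - y)) F(y) with F(y) := f_nu(exp y) and
   y = ln t / 2^m.  The whole chain therefore reduces to the doubling inequality
   exp(nu x) F(x) <= F(2x): writing p = exp(nu x), q = exp x, the difference
   F(2x) - p F(x) factors as the weighted AM-GM gap nu q + (1 - nu) - p >= 0 times a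
   weighted difference quotient of exp, which has the sign of x.  Since F is continuous
   at 0 with F(0) = 1, g_m(t) -> t^nu, and a decreasing sequence dominates its limit. *)
From Stdlib Require Import Reals Lra Psatz.
From Coquelicot Require Import Coquelicot.
Open Scope R_scope.

Definition lmean_num (nu p q : R) : R :=
  (1 - nu) / nu * (p - 1) + nu / (1 - nu) * (q - p).

Definition lmean_exp (nu x : R) : R := f_nu nu (exp x).

Lemma lmean_exp_0 (nu : R) : lmean_exp nu 0 = 1.
Proof.
  unfold lmean_exp, f_nu. rewrite exp_0.
  destruct (Req_EM_T 1 1); [reflexivity | lra].
Qed.

Lemma lmean_exp_eq (nu x : R) : x <> 0 ->
  lmean_exp nu x = lmean_num nu (exp (nu * x)) (exp x) / x.
Proof.
  intros hx. unfold lmean_exp, f_nu, lmean_num, Rpower. rewrite ln_exp.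
  destruct (Req_EM_T (exp x) 1) as [e|e].
  - rewrite <- exp_0 in e. apply exp_inv in e. contradiction.
  - rewrite Rmult_comm. reflexivity.
Qed.

Lemma exp_weighted_le (nu x : R) : 0 <= nu <= 1 ->
  exp (nu * x) <= nu * exp x + (1 - nu).
Proof.
  intros hnu.
  assert (split_x : exp x = exp (nu * x) * exp ((1 - nu) * x))
    by (rewrite <- exp_plus; f_equal; ring).
  assert (split_1 : 1 = exp (nu * x) * exp (- (nu * x)))
    by (rewrite <- exp_plus, <- exp_0; f_equal; ring).
  pose proof (exp_ineq1_le ((1 - nu) * x)).
  pose proof (exp_ineq1_le (- (nu * x))).
  pose proof (exp_pos (nu * x)).
  rewrite split_x. rewrite split_1 at 2.
  assert (nu * (1 + (1 - nu) * x) + (1 - nu) * (1 + - (nu * x))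
          <= nu * exp ((1 - nu) * x) + (1 - nu) * exp (- (nu * x))) by nra.
  nra.
Qed.

Lemma exp_weighted_diff_div_ge0 (nu x : R) : 0 < nu < 1 -> x <> 0 ->
  0 <= (nu * (exp x - exp (nu * x)) + (1 - nu) * (exp (nu * x) - 1)) / x.
Proof.
  intros hnu hx.
  destruct (Rlt_or_le 0 x) as [xpos|xle].
  - assert (exp 0 < exp (nu * x)) by (apply exp_increasing; nra).
    assert (exp (nu * x) < exp x) by (apply exp_increasing; nra).
    rewrite exp_0 in *.
    apply Rlt_le, Rdiv_lt_0_compat; nra.
  - assert (xneg : x < 0) by lra.
    assert (exp (nu * x) < exp 0) by (apply exp_increasing; nra).
    assert (exp x < exp (nu * x)) by (apply exp_increasing; nra).
    rewrite exp_0 in *.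
    apply Rlt_le, Rmult_neg_neg; [nra | apply Rinv_lt_0_compat; exact xneg].
Qed.

Lemma lmean_num_sq_sub (nu p q x : R) : 0 < nu < 1 -> x <> 0 ->
  lmean_num nu (p * p) (q * q) / (2 * x) - p * (lmean_num nu p q / x)
  = (nu * q + (1 - nu) - p) * ((nu * (q - p) + (1 - nu) * (p - 1)) / x)
    / (2 * nu * (1 - nu)).
Proof. intros hnu hx. unfold lmean_num. field. lra. Qed.

Lemma lmean_exp_double (nu x : R) : 0 < nu < 1 ->
  exp (nu * x) * lmean_exp nu x <= lmean_exp nu (2 * x).
Proof.
  intros hnu. destruct (Req_dec x 0) as [->|hx].
  { rewrite !Rmult_0_r, lmean_exp_0, exp_0. lra. }
  rewrite !lmean_exp_eq by lra.
  assert (sq_nu : exp (nu * (2 * x)) = exp (nu * x) * exp (nu * x))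
    by (rewrite <- exp_plus; f_equal; ring).
  assert (sq_1 : exp (2 * x) = exp x * exp x)
    by (rewrite <- exp_plus; f_equal; ring).
  rewrite sq_nu, sq_1.
  pose proof (exp_weighted_le nu x ltac:(lra)) as gap.
  pose proof (exp_weighted_diff_div_ge0 nu x hnu hx) as quot.
  pose proof (lmean_num_sq_sub nu (exp (nu * x)) (exp x) x hnu hx) as factor.
  assert (0 <= (nu * exp x + (1 - nu) - exp (nu * x))
               * ((nu * (exp x - exp (nu * x)) + (1 - nu) * (exp (nu * x) - 1)) / x)
               / (2 * nu * (1 - nu))).
  { apply Rdiv_le_0_compat; [apply Rmult_le_pos; lra | nra]. }
  lra.
Qed.

Lemma lmean_num_exp_derive_0 (nu : R) : 0 < nu < 1 ->
  derivable_pt_lim (fun x => lmean_num nu (exp (nu * x)) (exp x)) 0 1.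
Proof.
  intros hnu. apply is_derive_Reals. unfold lmean_num.
  auto_derive; auto. rewrite Rmult_0_r, exp_0. field. lra.
Qed.

(* F(x) is the difference quotient at 0 of its numerator, which vanishes there. *)
Lemma lmean_exp_continuous_0 (nu : R) : 0 < nu < 1 -> continuity_pt (lmean_exp nu) 0.
Proof.
  intros hnu eps heps.
  destruct (lmean_num_exp_derive_0 nu hnu eps heps) as [del hdel].
  exists del. split; [apply cond_pos|].
  intros x [_ hx]. simpl in *. unfold R_dist in *. rewrite lmean_exp_0.
  destruct (Req_dec x 0) as [->|x0].
  { rewrite lmean_exp_0, Rminus_diag, Rabs_R0. lra. }
  rewrite lmean_exp_eq by exact x0. rewrite Rminus_0_r in hx.
  specialize (hdel x x0 hx).
  unfold lmean_num in *.
  rewrite Rplus_0_l, Rmult_0_r, exp_0, !Rminus_diag, Rmult_0_r, Rmult_0_r,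
    Rplus_0_l, Rminus_0_r in hdel.
  exact hdel.
Qed.

Lemma g_m_exp (nu t : R) (m : nat) : 0 < t ->
  g_m nu m t = exp (nu * ln t - nu * (ln t / 2 ^ m)) * lmean_exp nu (ln t / 2 ^ m).
Proof.
  intros ht. unfold g_m, lmean_exp, Rpower. f_equal.
  - f_equal. field. apply pow_nonzero. lra.
  - f_equal. f_equal. unfold Rdiv. ring.
Qed.

Lemma g_m_succ_le (nu t : R) (k : nat) : 0 < nu < 1 -> 0 < t ->
  g_m nu (S k) t <= g_m nu k t.
Proof.
  intros hnu ht. rewrite !g_m_exp by exact ht.
  set (x := ln t / 2 ^ S k).
  replace (ln t / 2 ^ k) with (2 * x)
    by (unfold x; simpl; field; apply pow_nonzero; lra).
  replace (exp (nu * ln t - nu * x))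
    with (exp (nu * ln t - nu * (2 * x)) * exp (nu * x))
    by (rewrite <- exp_plus; f_equal; ring).
  rewrite Rmult_assoc. apply Rmult_le_compat_l; [apply Rlt_le, exp_pos|].
  apply lmean_exp_double; exact hnu.
Qed.

Lemma g_m_cv (nu t : R) : 0 < nu < 1 -> 0 < t ->
  Un_cv (fun m : nat => g_m nu m t) (Rpower t nu).
Proof.
  intros hnu ht.
  set (G := fun y => exp (nu * ln t - nu * y) * lmean_exp nu y).
  assert (hG : continuity_pt G 0).
  { apply continuity_pt_mult; [|apply lmean_exp_continuous_0; exact hnu].
    apply (continuity_pt_comp (fun y => nu * ln t - nu * y) exp).
    - reg.
    - apply derivable_continuous_pt, derivable_pt_exp. }
  replace (Rpower t nu) with (G 0).
  2:{ unfold G, Rpower. rewrite lmean_exp_0, Rmult_0_r, Rminus_0_r, Rmult_1_r.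
      f_equal; ring. }
  intros eps heps.
  destruct (continuity_seq G _ 0 hG (cv_pow_half (ln t)) eps heps) as [N hN].
  exists N. intros n hn. rewrite g_m_exp by exact ht. apply hN; exact hn.
Qed.

Theorem corollary2p10 (nu t : R) (hnu0 : 0 < nu) (hnu1 : nu < 1) (ht : 0 < t) :
  (forall m : nat, (1 <= m)%nat ->
     Rpower t nu <= g_m nu m t /\ g_m nu m t <= g_m nu (m - 1) t) /\
  Un_cv (fun m : nat => g_m nu m t) (Rpower t nu).
Proof.
  assert (hnu : 0 < nu < 1) by lra.
  pose proof (g_m_cv nu t hnu ht) as hcv.
  assert (hdec : forall k, g_m nu (S k) t <= g_m nu k t)
    by (intros k; apply g_m_succ_le; assumption).
  split; [|exact hcv].
  intros m hm. split.
  - exact (decreasing_ineq (fun m => g_m nu m t) _ hdec hcv m).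
  - destruct m as [|k]; [lia|].
    replace (S k - 1)%nat with k by lia. apply hdec.
Qed.
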